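(* In the standing setup below, assume that the restriction of $h$ to $\Omega$ is one-to-one and $0\notin h(\Omega)$. Assume also $M=1$, so that for each $\gamma\in\Omega$ one has $\mathcal X_\gamma=\{a x_\gamma: a\in\mathbb C\}$ with $x_\gamma:=x_\gamma^1$ satisfying $\mathcal T(g)x_\gamma=\gamma(g)x_\gamma$ for all $g\in\mathbb G$, and assume $Ax_\gamma\neq0$ for every $\gamma\in\Omega$. Then $R_{\min}=h(F)$. Moreover, $F=\{\gamma\in\Omega: h(\gamma)\in R_{\min}\}$ can be recovered from the measurements $y_0,y_1,\dots,y_{2\kappa-1}$.
   Context: Standing setup. Let $\mathbb G$ be a locally compact abelian group (written additively) with Haar measure $dg$ and Pontryagin dual $\widehat{\mathbb G}$ (the group of continuous unitary characters $\gamma:\mathbb G\to\mathbb T$). A weight is a measurable, locally bounded, even function $w:\mathbb G\to[1,\infty)$ with $w(g_1+g_2)\le w(g_1)w(g_2)$ for all $g_1,g_2$; it is assumed to satisfy the Beurling–Domar condition $\sum_{n=0}^\infty \frac{\ln w(ng)}{1+n^2}<\infty$ for all $g\in\mathbb G$, where $ng=g+\dots+g$ ($n$ times). $L_w(\mathbb G)$ is the Banach algebra of functions $f$ with $\|f\|_w=\int_{\mathbb G}|f(g)|w(g)\,dg<\infty$, with convolution as multiplication, and $\hat f(\gamma)=\int_{\mathbb G}f(g)\gamma(-g)\,dg$. Let $\mathcal X$ be a complex Banach space and $\mathcal T:\mathbb G\to B(\mathcal X)$ a strongly continuous group representation with $\|\mathcal T(g)\|\le w(g)$ for all $g$. $\mathcal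 X$ is an $L_w(\mathbb G)$-module via $fx=\int_{\mathbb G}f(g)\mathcal T(-g)x\,dg$, assumed non-degenerate ($fx=0$ for all $f$ implies $x=0$). The Beurling spectrum of $N\subseteq\mathcal X$ is $\Lambda(N)=\{\gamma\in\widehat{\mathbb G}:$ for every $f\in L_w(\mathbb G)$ with $\hat f(\gamma)\ne0$ there is $x\in N$ with $fx\neq0\}$; $\Lambda(x):=\Lambda(\{x\})$. For closed $F\subseteq\widehat{\mathbb G}$, $\mathcal X(F)=\{x\in\mathcal X:\Lambda(x)\subseteq F\}$ and $\mathcal X_\gamma:=\mathcal X(\{\gamma\})$. Fixed data: a set $\Omega\subseteq\widehat{\mathbb G}$ and integers $M,\kappa\ge1$ such that for every $\gamma\in\Omega$, $\mathcal X_\gamma$ has finite dimension $m_\gamma\le M$, with a basis $x_\gamma^1,\dots,x_\gamma^{m_\gamma}$. $F\subseteq\Omega$ is a finite set of cardinality $\kappa$ and $x=\sum_{\gamma\in F}\sum_{m=1}^{m_\gamma}c_{\gamma m}x_\gamma^m$ with $c_{\gamma m}\in\mathbb C$, where for each $\gamma\in F$ some $c_{\gamma m}\ne0$. $A:\mathcal X\to\mathbb C^S$ ($S\in\mathbb N$) is a linear operator and $B=\sum_{n=1}^N b_n\mathcal T(g_n)$ with $g_n\in\mathbb G$, $b_n\in\mathbb C\setminus\{0\}$; set $h(\gamma)=\sum_{n=1}^N b_n\gamma(g_n)$ for $\gamma\in\widehat{\mathbb G}$. The measurements are $y_\ell=AB^\ell x$, $\ell=0,1,2,\dots$. The polynomial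 $p_{\min}(z)=\sum_{\ell=0}^{\kappa M}\alpha_\ell z^\ell$ has coefficients satisfying $\alpha_{\kappa M}=1$ and $\sum_{\ell=0}^{\kappa M}\alpha_\ell y_{\ell+k}=0$ for all $k=0,1,2,\dots$; if such coefficients are not unique, one chooses those for which the largest possible number of initial coefficients vanish, $\alpha_0=\alpha_1=\dots=\alpha_j=0$ with $j$ maximal. $R_{\min}$ denotes the set of non-zero roots of $p_{\min}$. *)

From mathcomp Require Import all_boot all_order all_algebra.
From mathcomp Require Import complex.
From mathcomp Require Import boolp classical_sets reals.
Set Implicit Arguments. Unset Strict Implicit. Unset Printing Implicit Defensive.
Import Order.TTheory GRing.Theory Num.Theory.
Local Open Scope ring_scope.
Local Open Scope classical_set_scope.

Section Defs.
Variable R : realType.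
Local Notation C := R[i].

Definition is_character (G : zmodType) (gam : G -> C) : Prop :=
  (forall g1 g2, gam (g1 + g2) = gam g1 * gam g2) /\ (forall g, `|gam g| = 1).

Definition is_representation (G : zmodType) (X : lmodType C)
    (T : G -> {linear X -> X}) : Prop :=
  (forall v, T 0 v = v) /\ (forall g1 g2 v, T (g1 + g2) v = T g1 (T g2 v)).

Definition opB (G : zmodType) (X : lmodType C) (T : G -> {linear X -> X})
    (N : nat) (b : 'I_N -> C) (gs : 'I_N -> G) (v : X) : X :=
  \sum_(n < N) b n *: T (gs n) v.

Definition hfun (G : zmodType) (N : nat) (b : 'I_N -> C) (gs : 'I_N -> G)
    (gam : G -> C) : C :=
  \sum_(n < N) b n * gam (gs n).

Definition measurements (X : lmodType C) (S : nat) (A : {linear X -> 'cV[C]_S})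
    (B : X -> X) (x : X) (l : nat) : 'cV[C]_S :=
  A (iter l B x).

Definition annihilates_upto (S : nat) (y : nat -> 'cV[C]_S) (p : {poly C}) (n : nat) : Prop :=
  forall k, (k < n)%N -> \sum_(l < size p) p`_l *: y (l + k)%N = 0.

Definition annihilates (S : nat) (y : nat -> 'cV[C]_S) (p : {poly C}) : Prop :=
  forall k, \sum_(l < size p) p`_l *: y (l + k)%N = 0.

Definition n_init_zeros (p : {poly C}) : nat := find (fun a => a != 0) p.

Definition is_pmin (S : nat) (y : nat -> 'cV[C]_S) (d : nat) (p : {poly C}) : Prop :=
  [/\ size p = d.+1, p \is monic, annihilates y p &
      forall q : {poly C}, size q = d.+1 -> q \is monic -> annihilates y q ->
        (n_init_zeros q <= n_init_zeros p)%N].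

Definition nonzero_roots (p : {poly C}) : set C := [set z | z != 0 /\ root p z].

End Defs.

(** The measurements form an exponential sum: with [lam i = h (F i)] and
    [u i = c i A x_(F i)] one has [y_l = sum_i lam_i^l u_i], because
    [x_gamma] is an eigenvector of [B] with eigenvalue [h gamma].  Hence
    [sum_l q_l y_(l+k) = sum_i lam_i^k q(lam_i) u_i]; if this vanishes for
    [k < kappa], the invertibility of the Vandermonde matrix of the distinct
    nodes [lam_i] forces [q(lam_i) = 0] for all [i].  A monic [q] of degree
    [kappa] is thus the product of the [X - lam_i], which conversely
    annihilates [y].  So [p_min] is unique and its (non-zero) roots are
    exactly [h(F)]; injectivity of [h] on [Omega] then recovers [F]. *)

From mathcomp Require Import all_boot all_order all_algebra.
From mathcomp Require Import complex.
From mathcomp Require Import boolp classical_sets reals.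

Set Implicit Arguments.
Unset Strict Implicit.
Unset Printing Implicit Defensive.
Import Order.TTheory GRing.Theory Num.Theory.
Local Open Scope ring_scope.

Section ExponentialSums.

Variables (K : fieldType) (V : lmodType K).

Lemma horner_sum_powers n (lam : 'I_n -> K) (w : 'I_n -> V) (q : {poly K}) :
  \sum_(l < size q) q`_l *: (\sum_i lam i ^+ l *: w i) =
  \sum_i q.[lam i] *: w i.
Proof.
under eq_bigr => l _ do rewrite scaler_sumr.
rewrite exchange_big /=; apply: eq_bigr => i _.
rewrite horner_coef scaler_suml; apply: eq_bigr => l _.
by rewrite scalerA.
Qed.

(* Applying [horner_sum_powers] to [q = prod_(i != j) (X - lam_i)], which
   vanishes at every node except [lam j], isolates [w j]. *)
Lemma power_sums_eq0 n (lam : 'I_n -> K) (w : 'I_n -> V) :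
  injective lam ->
  (forall k, (k < n)%N -> \sum_i lam i ^+ k *: w i = 0) ->
  forall j, w j = 0.
Proof.
move=> lam_inj sums0 j.
pose q := \prod_(i | i != j) ('X - (lam i)%:P).
have size_q : size q = n.
  rewrite size_prod; last by move=> i _; rewrite polyXsubC_eq0.
  under eq_bigr => i _ do rewrite size_XsubC.
  rewrite sum_nat_const cardC1 card_ord muln2 -addnn -addSn addnK.
  by rewrite prednK // (leq_ltn_trans _ (ltn_ord j)).
have q_lam i : i != j -> q.[lam i] = 0.
  by move=> ij; rewrite horner_prod (bigD1 i) //= !hornerE subrr mul0r.
have q_lam_j : q.[lam j] != 0.
  rewrite horner_prod prodf_seq_neq0; apply/allP => i _; apply/implyP => ij.
  by rewrite !hornerE subr_eq0; apply: contra ij => /eqP /lam_inj ->.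
have : \sum_i q.[lam i] *: w i = 0.
  rewrite -horner_sum_powers; apply: big1 => l _.
  by rewrite sums0 ?scaler0 // -size_q.
rewrite (bigD1 j) //= big1 ?addr0 => [|i ij]; last by rewrite q_lam ?scale0r.
by move/eqP; rewrite scaler_eq0 (negbTE q_lam_j) => /eqP.
Qed.

End ExponentialSums.

Lemma prod_XsubC_ord (K : idomainType) n (lam : 'I_n -> K) :
  \prod_i ('X - (lam i)%:P) = \prod_(z <- [seq lam i | i <- enum 'I_n]) ('X - z%:P).
Proof. by rewrite big_map big_enum. Qed.

Lemma size_prod_XsubC_ord (K : idomainType) n (lam : 'I_n -> K) :
  size (\prod_i ('X - (lam i)%:P)) = n.+1.
Proof. by rewrite prod_XsubC_ord size_prod_XsubC size_map size_enum_ord. Qed.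

Lemma root_prod_XsubC_ord (K : idomainType) n (lam : 'I_n -> K) z :
  root (\prod_i ('X - (lam i)%:P)) z = (z \in [seq lam i | i <- enum 'I_n]).
Proof. by rewrite prod_XsubC_ord root_prod_XsubC. Qed.

Lemma monic_eq_prod_XsubC (K : fieldType) n (lam : 'I_n -> K) (q : {poly K}) :
  injective lam -> size q = n.+1 -> q \is monic -> (forall i, root q (lam i)) ->
  q = \prod_i ('X - (lam i)%:P).
Proof.
move=> lam_inj size_q q_monic q_lam.
have P_monic : \prod_i ('X - (lam i)%:P) \is monic by apply: monic_prod_XsubC.
apply/eqP; rewrite eq_sym -(eqp_monic P_monic q_monic).
rewrite -dvdp_size_eqp; first by rewrite size_q size_prod_XsubC_ord.
rewrite prod_XsubC_ord; apply: uniq_roots_dvdp.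
  by apply/allP => z /mapP [i _ ->].
by rewrite uniq_rootsE map_inj_uniq ?enum_uniq.
Qed.

Section ExponentialMeasurements.

Variables (R : realType) (S n : nat).
Variables (lam : 'I_n -> R[i]) (u : 'I_n -> 'cV[R[i]]_S) (y : nat -> 'cV[R[i]]_S).
Hypothesis y_exp : forall l, y l = \sum_i lam i ^+ l *: u i.

Let P := \prod_i ('X - (lam i)%:P).

Lemma sum_coef_shift (q : {poly R[i]}) k :
  \sum_(l < size q) q`_l *: y (l + k)%N = \sum_i q.[lam i] *: (lam i ^+ k *: u i).
Proof.
rewrite -horner_sum_powers; apply: eq_bigr => l _; congr (_ *: _).
by rewrite y_exp; apply: eq_bigr => i _; rewrite exprD scalerA.
Qed.

Lemma annihilates_prod_XsubC : annihilates y P.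
Proof.
move=> k; rewrite sum_coef_shift; apply: big1 => i _.
have /eqP -> : root P (lam i) by rewrite root_prod_XsubC_ord map_f ?mem_enum.
by rewrite scale0r.
Qed.

Hypotheses (lam_inj : injective lam) (u_neq0 : forall i, u i != 0).

Lemma annihilates_upto_root (q : {poly R[i]}) :
  annihilates_upto y q n -> forall i, root q (lam i).
Proof.
move=> q_ann i.
have : q.[lam i] *: u i = 0.
  apply: (power_sums_eq0 (w := fun j => q.[lam j] *: u j) lam_inj) => k lt_kn.
  rewrite -[RHS](q_ann k lt_kn) sum_coef_shift.
  by apply: eq_bigr => j _; rewrite !scalerA mulrC.
by move/eqP; rewrite scaler_eq0 (negbTE (u_neq0 i)) orbF.
Qed.

Lemma annihilates_upto_eq_prod (q : {poly R[i]}) :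
  size q = n.+1 -> q \is monic -> annihilates_upto y q n -> q = P.
Proof.
move=> size_q q_monic /annihilates_upto_root.
exact: monic_eq_prod_XsubC.
Qed.

Lemma is_pminE (p : {poly R[i]}) : is_pmin y n p <-> p = P.
Proof.
split=> [[size_p p_monic p_ann _]|->].
  by apply: annihilates_upto_eq_prod => // k _; apply: p_ann.
split; [exact: size_prod_XsubC_ord | exact: monic_prod_XsubC |
        exact: annihilates_prod_XsubC |].
move=> q size_q q_monic q_ann.
by rewrite (annihilates_upto_eq_prod size_q q_monic) // => k _; apply: q_ann.
Qed.

End ExponentialMeasurements.

Local Open Scope classical_set_scope.

Lemma nonzero_roots_prod_XsubC (R : realType) n (lam : 'I_n -> R[i]) :
  (forall i, lam i != 0) -> nonzero_roots (\prod_i ('X - (lam i)%:P)) = range lam.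
Proof.
move=> lam_neq0; apply/seteqP; split => z /=.
  by case=> _; rewrite root_prod_XsubC_ord => /mapP [i _ ->]; exists i.
by case=> i _ <-; split; rewrite ?root_prod_XsubC_ord ?map_f ?mem_enum.
Qed.

Section Representation.

Variables (R : realType) (G : zmodType) (X : lmodType R[i]).
Variables (T : G -> {linear X -> X}) (N : nat) (b : 'I_N -> R[i]) (gs : 'I_N -> G).

Local Notation B := (opB T b gs).
Local Notation h := (hfun b gs).

Lemma opB_eigenvector (gam : G -> R[i]) (v : X) :
  (forall g, T g v = gam g *: v) -> B v = h gam *: v.
Proof.
move=> Tv; rewrite /opB /hfun scaler_suml; apply: eq_bigr => n _.
by rewrite Tv scalerA.
Qed.

Lemma opB_sum n (a : 'I_n -> R[i]) (w : 'I_n -> X) :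
  B (\sum_i a i *: w i) = \sum_i a i *: B (w i).
Proof.
rewrite /opB; under eq_bigr => m _ do rewrite linear_sum scaler_sumr.
rewrite exchange_big /=; apply: eq_bigr => i _.
rewrite scaler_sumr; apply: eq_bigr => m _.
by rewrite linearZ /= !scalerA mulrC.
Qed.

Variables (n : nat) (gam : 'I_n -> G -> R[i]) (w : 'I_n -> X).
Hypothesis w_eigen : forall i g, T g (w i) = gam i g *: w i.

Lemma iter_opB_eigen_sum (c : 'I_n -> R[i]) l :
  iter l B (\sum_i c i *: w i) = \sum_i (c i * h (gam i) ^+ l) *: w i.
Proof.
elim: l => [|l IH]; first by apply: eq_bigr => i _; rewrite mulr1.
rewrite iterS IH opB_sum; apply: eq_bigr => i _.
by rewrite (opB_eigenvector (w_eigen i)) scalerA exprSr mulrA.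
Qed.

Lemma measurements_eigen_sum S (A : {linear X -> 'cV[R[i]]_S}) (c : 'I_n -> R[i]) l :
  measurements A B (\sum_i c i *: w i) l =
  \sum_i h (gam i) ^+ l *: (c i *: A (w i)).
Proof.
rewrite /measurements iter_opB_eigen_sum linear_sum; apply: eq_bigr => i _.
by rewrite linearZ /= scalerA mulrC.
Qed.

End Representation.

Theorem theorem2p2
  (R : realType) (G : zmodType) (X : lmodType R[i])
  (T : G -> {linear X -> X}) (HT : is_representation T)
  (Omega : set (G -> R[i])) (HOmega : forall gam, Omega gam -> is_character gam)
  (xg : (G -> R[i]) -> X)
  (Hxg : forall gam, Omega gam -> forall g, T g (xg gam) = gam g *: xg gam)
  (kappa : nat) (Hkappa : (1 <= kappa)%N)
  (F : 'I_kappa -> (G -> R[i])) (HFinj : injective F)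
  (HFO : forall i, Omega (F i))
  (c : 'I_kappa -> R[i]) (Hc : forall i, c i != 0)
  (S : nat) (A : {linear X -> 'cV[R[i]]_S})
  (N : nat) (b : 'I_N -> R[i]) (Hb : forall n, b n != 0) (gs : 'I_N -> G)
  (Hhinj : {in Omega &, injective (hfun b gs)})
  (Hh0 : forall gam, Omega gam -> hfun b gs gam != 0)
  (HA : forall gam, Omega gam -> A (xg gam) != 0) :
  let x := \sum_(i < kappa) c i *: xg (F i) in
  let y := measurements A (opB T b gs) x in
  (exists p, is_pmin y (kappa * 1) p) /\
  (forall p, is_pmin y (kappa * 1) p ->
     nonzero_roots p = hfun b gs @` range F /\
     range F = [set gam | Omega gam /\ nonzero_roots p (hfun b gs gam)]) /\
  (forall p : {poly R[i]}, size p = kappa.+1 -> p \is monic ->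
     annihilates_upto y p kappa ->
     range F = [set gam | Omega gam /\ nonzero_roots p (hfun b gs gam)]).
Proof.
move=> x y; rewrite muln1.
set h := hfun b gs; pose lam i := h (F i); pose P := \prod_i ('X - (lam i)%:P).
have y_exp l : y l = \sum_i lam i ^+ l *: (c i *: A (xg (F i))).
  by rewrite /y /x (measurements_eigen_sum b gs (fun i => Hxg _ (HFO i))).
have lam_inj : injective lam.
  by move=> i j /Hhinj; rewrite !inE => /(_ (HFO i) (HFO j)) /HFinj.
have u_neq0 i : c i *: A (xg (F i)) != 0 by rewrite scaler_eq0 negb_or Hc HA.
have rootsP : nonzero_roots P = h @` range F.
  by rewrite nonzero_roots_prod_XsubC ?image_comp // => i; apply: Hh0.
have rangeF : range F = [set gam | Omega gam /\ nonzero_roots P (h gam)].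
  rewrite rootsP; apply/seteqP; split=> gam /=.
    by case=> i _ <-; split; [apply: HFO | exists (F i); [exists i|]].
  case=> Ogam [_ [i _ <-] h_eq]; exists i => //.
  by apply: Hhinj h_eq; rewrite inE.
have pminE := is_pminE y_exp lam_inj u_neq0.
have eq_prod := annihilates_upto_eq_prod y_exp lam_inj u_neq0.
split; first by exists P; apply/pminE.
split; first by move=> p /pminE ->.
by move=> p size_p p_monic /(eq_prod _ size_p p_monic) ->.
Qed.
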